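(* Let $e\ge 3$, let $y\in[1,e-1]$ be rational with denominator $z>1$, and $i\in\mathbb Z/e\mathbb Z$. Suppose a partition $\lambda$ has a removable $i$-node $(r,c)$ and an addable $i$-node $(s,d)$ with $\mathrm{dep}(s,d)-e<\mathrm{dep}(r,c)<\mathrm{dep}(s,d)$. Then $\lambda$ has a $y$-bad hook.
   Context: Nodes are elements $(r,c)$ of $\mathbb N^2$ (row, column); the residue of $(r,c)\in\mathbb Z^2$ is $c-r+e\mathbb Z$ and an $i$-node is a node of residue $i$. A removable node of $\lambda$ is a node $(r,\lambda_r)$ with $\lambda_r>\lambda_{r+1}$; an addable node is a node not in $\lambda$ whose addition gives a partition. The depth of $(r,c)\in\mathbb Z^2$ is $\mathrm{dep}(r,c)=yr+(e-y)c$. The hook of $\lambda$ at $(r,c)$ has length $\lambda_r-c+\lambda'_c-r+1$ and arm length $\lambda_r-c$. A hook is $y$-bad if it has length $te$ and arm length $\lfloor yt\rfloor$ for some positive integer $t$ not divisible by $z$. *)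

From mathcomp Require Import all_boot all_order all_algebra.
Set Implicit Arguments. Unset Strict Implicit. Unset Printing Implicit Defensive.
Import Order.TTheory GRing.Theory Num.Theory.

(* Partitions are finite nonincreasing sequences of positive integers.
   Rows and columns are numbered from 1: row r has length part_row la r
   (= 0 for rows beyond the partition). *)
Definition is_partition (la : seq nat) : bool :=
  sorted geq la && (0 \notin la).

Definition part_row (la : seq nat) (r : nat) : nat := nth 0 la r.-1.

Definition part_col (la : seq nat) (c : nat) : nat :=
  count (fun x => c <= x) la.

Definition in_part (la : seq nat) (r c : nat) : bool :=
  [&& 1 <= r, 1 <= c & c <= part_row la r].

Definition young_set (S : nat -> nat -> bool) : Prop :=
  forall a b, S a b ->
    [/\ 1 <= a, 1 <= b, (1 < a -> S a.-1 b) & (1 < b -> S a b.-1)].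

Definition removable (la : seq nat) (r c : nat) : Prop :=
  1 <= r /\ c = part_row la r /\ part_row la r > part_row la r.+1.

Definition addable (la : seq nat) (s d : nat) : Prop :=
  1 <= s /\ 1 <= d /\ ~~ in_part la s d /\
  young_set (fun a b => in_part la a b || ((a == s) && (b == d))).

Definition is_res (e : nat) (i : int) (r c : nat) : Prop :=
  ((Posz c - Posz r)%R = i %[mod Posz e])%Z.

Definition dep (e : nat) (y : rat) (r c : nat) : rat :=
  (y * r%:R + (e%:R - y) * c%:R)%R.

Definition hook_length (la : seq nat) (r c : nat) : nat :=
  part_row la r - c + part_col la c - r + 1.

Definition arm_length (la : seq nat) (r c : nat) : nat :=
  part_row la r - c.

Definition y_bad_hook (e : nat) (y : rat) (la : seq nat) (r c : nat) : Prop :=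
  in_part la r c /\
  exists t : nat, 0 < t /\ ~~ ((denq y) %| Posz t)%Z /\
    hook_length la r c = t * e /\
    Posz (arm_length la r c) = Num.floor (y * t%:R)%R.

Definition has_y_bad_hook (e : nat) (y : rat) (la : seq nat) : Prop :=
  exists r c, y_bad_hook e y la r c.

From mathcomp Require Import all_boot all_order all_algebra.
From mathcomp Require Import zify ring lra.
Import Order.TTheory GRing.Theory Num.Theory.

Set Implicit Arguments.
Unset Strict Implicit.
Unset Printing Implicit Defensive.

(* Write a = s - r and b = d - c.  Equal residues give an integer
   K with b = a + K e, and then dep(s,d) - dep(r,c) = e (a + (e - y) K), so the
   depth hypothesis says exactly that the "gap" a + (e - y) K lies in (0,1).
   K = 0 is impossible since a is an integer.  For K = t > 0 the gap forces
   s < r and the hook at (s,c) has arm b - 1 and leg r - s; for K = -t < 0 it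
   forces r < s and the hook at (r,d) has arm -b and leg s - 1 - r.  In both
   cases arm + leg + 1 = t e and the gap condition reads  arm < y t < arm + 1,
   i.e. arm = floor(y t) with y t not an integer, so that the denominator of
   y does not divide t: the hook is y-bad. *)

Section PartitionCombinatorics.

Variable la : seq nat.

Lemma part_col_eq (c r : nat) : sorted geq la -> 0 < r ->
  c <= part_row la r -> part_row la r.+1 < c -> part_col la c = r.
Proof.
rewrite /part_col /part_row /=.
elim: la r => [|x l IH] r sorted_xl r_gt0 le_c lt_c.
  by rewrite !nth_nil in le_c lt_c; lia.
have x_ge_l : all (geq x) l := order_path_min (rev_trans leq_trans) sorted_xl.
have sorted_l : sorted geq l := path_sorted sorted_xl.
case: r r_gt0 le_c lt_c => [//|[|r]] _ /= le_c lt_c.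
- suff -> : count (fun x => c <= x) l = 0 by rewrite le_c.
  apply/eqP; rewrite -leqn0 leqNgt -has_count; apply/hasPn => z z_l.
  case: l {IH x_ge_l sorted_xl} sorted_l lt_c z_l => [//|w l] /= sorted_wl lt_c.
  rewrite inE => /orP[/eqP-> | z_l]; first by rewrite -ltnNge.
  have := allP (order_path_min (rev_trans leq_trans) sorted_wl) z z_l.
  by rewrite /= -ltnNge => z_le_w; exact: leq_ltn_trans z_le_w lt_c.
- have c_le_x : c <= x.
    case: (ltnP r (size l)) => r_l.
      by apply: leq_trans le_c _; exact: (all_nthP 0 x_ge_l).
    by move: le_c lt_c; rewrite nth_default //; lia.
  by rewrite c_le_x (IH r.+1 sorted_l).
Qed.

Lemma removable_col (r c : nat) :
  sorted geq la -> removable la r c -> part_col la c = r.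
Proof. by move=> sorted_la [r_gt0 [-> lt_row]]; exact: part_col_eq. Qed.

Lemma addable_row (s d : nat) : addable la s d -> part_row la s = d.-1.
Proof.
move=> [s_gt0 [d_gt0 [notin young]]].
have row_lt : part_row la s < d.
  by move: notin; rewrite /in_part s_gt0 d_gt0 -ltnNge.
case: d d_gt0 {notin} young row_lt => [//|[|d]] _ young row_lt; first by lia.
have := young s d.+2; rewrite !eqxx orbT => /(_ isT) [_ _ _ /(_ isT)].
by case/orP => [/and3P[_ _] | /andP[_ /eqP]] /=; lia.
Qed.

Lemma addable_row_above (s d : nat) : addable la s d -> 1 < s ->
  d <= part_row la s.-1.
Proof.
move=> [_ [_ [_ young]]] s_gt1.
have := young s d; rewrite !eqxx orbT => /(_ isT) [_ _ /(_ s_gt1) + _].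
by case/orP => [/and3P[_ _] | /andP[/eqP]] //; lia.
Qed.

Lemma addable_col (s d : nat) :
  sorted geq la -> addable la s d -> 1 < s -> part_col la d = s.-1.
Proof.
move=> sorted_la add_sd s_gt1; apply: part_col_eq => //; first by lia.
  exact: addable_row_above.
by rewrite (ltn_predK s_gt1) (addable_row add_sd); case: add_sd => _ []; lia.
Qed.

End PartitionCombinatorics.

Local Open Scope ring_scope.

(* If the real y t lies strictly between the consecutive integers n and n+1,
   then the denominator of y cannot divide t (otherwise y t is an integer). *)
Lemma denq_ndvd_of_nonint (y : rat) (t n : nat) :
  n%:R < y * t%:R < n%:R + 1 -> ~~ (denq y %| Posz t)%Z.
Proof.
move=> /andP[lt_n lt_n1]; apply/negP => /dvdzP [q t_eq].
have yt_int : y * t%:R = (q * numq y)%:~R.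
  by rewrite -[t%:R]/((Posz t)%:~R) t_eq !intrM numqE; ring.
rewrite yt_int -[n%:R]/((Posz n)%:~R) -[1]/(1%:~R) -intrD !ltr_int
  in lt_n lt_n1.
lia.
Qed.

Lemma y_bad_hook_of_arm_leg (e : nat) (y : rat) (la : seq nat)
    (r c arm leg t : nat) :
  (1 <= r)%N -> (1 <= c)%N -> (0 < t)%N ->
  part_row la r = (c + arm)%N -> part_col la c = (r + leg)%N ->
  (arm + leg).+1 = (t * e)%N ->
  arm%:R < y * t%:R < arm%:R + 1 ->
  y_bad_hook e y la r c.
Proof.
move=> r_gt0 c_gt0 t_gt0 row_eq col_eq hook_eq /andP[arm_lt arm_gt].
split; first by rewrite /in_part r_gt0 c_gt0 row_eq leq_addr.
exists t; split=> //; split.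
  by apply: (@denq_ndvd_of_nonint _ _ arm); rewrite arm_lt arm_gt.
rewrite /hook_length /arm_length row_eq col_eq; split; first by lia.
rewrite addKn; apply/esym/floor_def.
by rewrite intrD (ltW arm_lt) arm_gt.
Qed.

Lemma same_res_shift (e : nat) (i : int) (r c s d : nat) :
  is_res e i r c -> is_res e i s d ->
  exists K : int, Posz d + Posz r = Posz c + Posz s + K * Posz e.
Proof.
move=> res_rc res_sd.
have : (Posz e %| (Posz d - Posz s) - (Posz c - Posz r))%Z.
  by rewrite -eqz_mod_dvd; apply/eqP; rewrite res_sd res_rc.
by case/dvdzP => K K_eq; exists K; rewrite -K_eq; ring.
Qed.

Lemma depth_gap (e : nat) (y : rat) (r c s d : nat) (K : int) :
  (0 < e)%N -> Posz d + Posz r = Posz c + Posz s + K * Posz e ->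
  dep e y s d - e%:R < dep e y r c -> dep e y r c < dep e y s d ->
  0 < s%:R - r%:R + (e%:R - y) * K%:~R < 1.
Proof.
move=> e_gt0 shift lt_lo lt_hi.
have shift_rat : d%:R + r%:R = c%:R + s%:R + K%:~R * e%:R :> rat.
  by have := congr1 (fun z : int => z%:~R : rat) shift; rewrite /= !intrD intrM.
have d_eq : d%:R = c%:R + s%:R + K%:~R * e%:R - r%:R :> rat.
  by rewrite -shift_rat; ring.
have dep_diff : dep e y s d - dep e y r c =
    e%:R * (s%:R - r%:R + (e%:R - y) * K%:~R).
  by rewrite /dep d_eq; ring.
have e_pos : (0 : rat) < e%:R by rewrite ltr0n.
apply/andP; split.
  by rewrite -(pmulr_rgt0 _ e_pos) -dep_diff subr_gt0.
by rewrite -(ltr_pM2l e_pos) mulr1 -dep_diff; lra.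
Qed.

Lemma bad_hook_below (e : nat) (y : rat) (la : seq nat) (r c s d t : nat) :
  sorted geq la -> removable la r c -> addable la s d ->
  1 <= y -> 1 <= e%:R - y -> (0 < t)%N ->
  (d + r = c + s + t * e)%N ->
  0 < s%:R - r%:R + (e%:R - y) * t%:R < 1 ->
  y_bad_hook e y la s c.
Proof.
move=> sorted_la rem_rc add_sd y_ge1 ey_ge1 t_gt0 shift /andP[gap_gt0 gap_lt1].
have t_ge1 : 1 <= t%:R :> rat by rewrite ler1n.
have shift_rat : d%:R + r%:R = c%:R + s%:R + t%:R * e%:R :> rat.
  by have := congr1 (fun n => n%:R : rat) shift; rewrite /= !natrD natrM.
have lt_sr : (s < r)%N by rewrite -(ltr_nat rat); nra.
have lt_cd : (c < d)%N by rewrite -(ltr_nat rat); nra.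
have [arm d_def] : exists arm, d = (c + arm.+1)%N by exists (d - c.+1)%N; lia.
have [[s_gt0 _] [_ [c_def row_drop]]] := (add_sd, rem_rc).
apply: (@y_bad_hook_of_arm_leg _ _ _ _ _ arm (r - s) t) => //.
- by rewrite c_def (leq_ltn_trans _ row_drop).
- by rewrite (addable_row add_sd) d_def addnS.
- by rewrite (removable_col sorted_la rem_rc); lia.
- by lia.
- have : d%:R = c%:R + arm%:R + 1 :> rat by rewrite d_def addnS -addn1 !natrD.
  by move=> d_rat; apply/andP; split; nra.
Qed.

Lemma bad_hook_right (e : nat) (y : rat) (la : seq nat) (r c s d t : nat) :
  sorted geq la -> removable la r c -> addable la s d ->
  1 <= y -> 1 <= e%:R - y -> (0 < t)%N ->
  (c + s = d + r + t * e)%N ->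
  0 < s%:R - r%:R - (e%:R - y) * t%:R < 1 ->
  y_bad_hook e y la r d.
Proof.
move=> sorted_la rem_rc add_sd y_ge1 ey_ge1 t_gt0 shift /andP[gap_gt0 gap_lt1].
have t_ge1 : 1 <= t%:R :> rat by rewrite ler1n.
have shift_rat : c%:R + s%:R = d%:R + r%:R + t%:R * e%:R :> rat.
  by have := congr1 (fun n => n%:R : rat) shift; rewrite /= !natrD natrM.
have lt_rs : (r < s)%N by rewrite -(ltr_nat rat); nra.
have lt_dc : (d < c)%N by rewrite -(ltr_nat rat); nra.
have [arm c_def] : exists arm, c = (d + arm)%N by exists (c - d)%N; lia.
have [[r_gt0 [row_r _]] [_ [d_gt0 _]]] := (rem_rc, add_sd).
apply: (@y_bad_hook_of_arm_leg _ _ _ _ _ arm (s.-1 - r) t) => //.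
- by rewrite -row_r.
- by rewrite (addable_col sorted_la add_sd); lia.
- by lia.
- have : c%:R = d%:R + arm%:R :> rat by rewrite c_def natrD.
  by move=> c_rat; apply/andP; split; nra.
Qed.

Unset Implicit Arguments.

Theorem mainTheorem4 (e : nat) (y : rat) (i : int) (la : seq nat) (r c s d : nat) :
  (3 <= e)%N ->
  1 <= y -> y <= e%:R - 1 ->
  (1 < denq y)%R ->
  is_partition la ->
  removable la r c -> is_res e i r c ->
  addable la s d -> is_res e i s d ->
  dep e y s d - e%:R < dep e y r c -> dep e y r c < dep e y s d ->
  has_y_bad_hook e y la.
Proof.
move=> e_ge3 y_ge1 y_le _ /andP[sorted_la _] rem_rc res_rc add_sd res_sd lo hi.
have ey_ge1 : 1 <= e%:R - y by lra.
have [K shift] := same_res_shift res_rc res_sd.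
have := depth_gap (ltnW (ltnW e_ge3)) shift lo hi.
case: K shift => [[|t] | t] shift; rewrite ?NegzE ?mulrNz.
- (* K = 0 is impossible: s - r would be an integer strictly inside (0,1) *)
  rewrite mulr0 addr0 => /andP[gap_gt0 gap_lt1]; exfalso.
  have [le_sr | lt_rs] := leqP s r.
    by move: le_sr; rewrite -(ler_nat rat); lra.
  by move: lt_rs; rewrite -(ler_nat rat) -addn1 natrD; lra.
- (* K = t > 0: the hook at (s,c) *)
  move=> gap; exists s, c.
  apply: (@bad_hook_below _ _ _ _ _ _ _ t.+1 sorted_la rem_rc add_sd) => //.
  lia.
- (* K = -t < 0: the hook at (r,d) *)
  move=> gap; exists r, d.
  apply: (@bad_hook_right _ _ _ _ _ _ _ t.+1 sorted_la rem_rc add_sd) => //.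
    lia.
  by move: gap; rewrite mulrN.
Qed.
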